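(* Let $\mathcal X$ be finite and $P_0,P_1,\hat P_0,\hat P_1$ distributions on $\mathcal X$ with full support. Consider the mismatched sequential probability ratio test with thresholds $\hat\gamma_0,\hat\gamma_1>0$: with $\hat S_n=\sum_{i=1}^n\log\frac{\hat P_0(x_i)}{\hat P_1(x_i)}$, stop at $\hat\tau=\inf\{n\ge1:\hat S_n\ge\hat\gamma_0\text{ or }\hat S_n\le-\hat\gamma_1\}$ and decide $0$ if $\hat S_{\hat\tau}\ge\hat\gamma_0$ and $1$ if $\hat S_{\hat\tau}\le-\hat\gamma_1$; let $\hat\epsilon_0$ (resp. $\hat\epsilon_1$) be the probability of deciding $1$ (resp. $0$) under i.i.d. $P_0$ (resp. $P_1$) observations. If $D(P_0\|\hat P_1)-D(P_0\|\hat P_0)<0$, then $\hat\epsilon_0\to1$ as $\hat\gamma_0,\hat\gamma_1\to\infty$. Similarly, if $D(P_1\|\hat P_0)-D(P_1\|\hat P_1)<0$, then $\hat\epsilon_1\to1$ as $\hat\gamma_0,\hat\gamma_1\to\infty$.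
   Context: $D$ is relative entropy; $P_0,P_1$ are the true distributions and $\hat P_0,\hat P_1$ those used in the test. *)

From HB Require Import structures.
From mathcomp Require Import all_boot all_order all_algebra.
From mathcomp Require Import all_classical all_reals all_analysis.
Set Implicit Arguments. Unset Strict Implicit. Unset Printing Implicit Defensive.
Import Order.TTheory GRing.Theory Num.Theory numFieldNormedType.Exports.
Local Open Scope ring_scope.

Definition full_pmf {R : realType} {X : finType} (p : {ffun X -> R}) : Prop :=
  (forall x, 0 < p x) /\ \sum_(x : X) p x = 1.

Definition KL {R : realType} {X : finType} (p q : {ffun X -> R}) : R :=
  \sum_(x : X) p x * ln (p x / q x).

Definition llr {R : realType} {X : finType} (Q0 Q1 : {ffun X -> R}) (x : X) : R :=
  ln (Q0 x / Q1 x).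

Definition Spart {R : realType} {X : finType} (Q0 Q1 : {ffun X -> R}) (n k : nat)
  (t : n.-tuple X) : R :=
  \sum_(i < n | (i < k)%N) llr Q0 Q1 (tnth t i).

(* The mismatched SPRT with thresholds g0 g1 stops exactly at time n
   (with observations t = x_1..x_n) and decides d. *)
Definition stop_decide {R : realType} {X : finType} (Q0 Q1 : {ffun X -> R})
  (g0 g1 : R) (d : bool) (n : nat) (t : n.-tuple X) : bool :=
  [&& (0 < n)%N,
      [forall k : 'I_n, (0 < k)%N ==>
          ((- g1 < Spart Q0 Q1 k t) && (Spart Q0 Q1 k t < g0))]
    & (if d then Spart Q0 Q1 n t <= - g1   (* d = true : decide 1 *)
       else g0 <= Spart Q0 Q1 n t)].       (* d = false: decide 0 *)

Definition prob_stop_decide {R : realType} {X : finType} (P Q0 Q1 : {ffun X -> R})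
  (g0 g1 : R) (d : bool) (n : nat) : R :=
  \sum_(t : n.-tuple X)
     (\prod_(i < n) P (tnth t i)) * (stop_decide Q0 Q1 g0 g1 d t)%:R.

Definition prob_decide {R : realType} {X : finType} (P Q0 Q1 : {ffun X -> R})
  (g0 g1 : R) (d : bool) : R :=
  limn (series (fun n : nat => prob_stop_decide P Q0 Q1 g0 g1 d n : R) : R^nat).

Definition eps0 {R : realType} {X : finType} (P0 Q0 Q1 : {ffun X -> R}) (g0 g1 : R) : R :=
  prob_decide P0 Q0 Q1 g0 g1 true.
Definition eps1 {R : realType} {X : finType} (P1 Q0 Q1 : {ffun X -> R}) (g0 g1 : R) : R :=
  prob_decide P1 Q0 Q1 g0 g1 false.

Definition tends_to_as_thresholds_grow {R : realType} (f : R -> R -> R) (l : R) : Prop :=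
  forall e : R, 0 < e -> exists M : R, forall g0 g1 : R,
    0 < g0 -> 0 < g1 -> M < g0 -> M < g1 -> `|f g0 g1 - l| < e.

(* Under P the mismatched log-likelihood increments llr Q0 Q1 have mean
   D(P||Q1) - D(P||Q0) < 0, so rho := E exp (th * llr Q0 Q1) < 1 for some th > 0.
   By Chernoff's bound the random walk of partial sums reaches g0 at time k with
   probability at most exp(-th g0) rho^k, and is still above -g1 at time N with
   probability at most exp(th g1) rho^N.  A run avoiding both events has stopped
   below -g1 by time N, so letting N -> oo the test decides 1 with probability at
   least 1 - exp(-th g0) / (1 - rho), uniformly in g1 > 0.  Exchanging the roles of Q0 and
   Q1 negates the log-likelihood ratio and turns eps1 into eps0. *)

From HB Require Import structures.
From mathcomp Require Import all_boot all_order all_algebra.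
From mathcomp Require Import all_classical all_reals all_analysis.
From mathcomp Require Import lra ring.
Import Order.TTheory GRing.Theory Num.Theory numFieldNormedType.Exports.
Set Implicit Arguments. Unset Strict Implicit. Unset Printing Implicit Defensive.
Local Open Scope ring_scope.

Section TupleSums.
Variables (R : comPzSemiRingType) (X : finType).

Lemma sum_tuple0 (F : 0.-tuple X -> R) : \sum_(t : 0.-tuple X) F t = F [tuple].
Proof.
rewrite (eq_bigr (fun _ => F [tuple])) => [|t _]; last by rewrite tuple0.
by rewrite sumr_const card_tuple expn0.
Qed.

Lemma sum_tuple_cons n (F : n.+1.-tuple X -> R) :
  \sum_(t : n.+1.-tuple X) F t = \sum_x \sum_(t : n.-tuple X) F [tuple of x :: t].
Proof.
rewrite pair_big /= (reindex (fun p : X * n.-tuple X => [tuple of p.1 :: p.2])) //=.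
exists (fun t : n.+1.-tuple X => (thead t, [tuple of behead t])).
  by move=> [x t] _ /=; rewrite theadE; congr pair; apply: val_inj.
by move=> t _; rewrite [RHS]tuple_eta; apply: val_inj.
Qed.

Lemma sum_tuple_prod n (F : X -> R) :
  \sum_(t : n.-tuple X) \prod_(y <- t) F y = (\sum_x F x) ^+ n.
Proof.
elim: n => [|n IHn]; first by rewrite sum_tuple0 big_nil expr0.
rewrite sum_tuple_cons exprS big_distrl /=; apply: eq_bigr => x _.
by rewrite -IHn big_distrr /=; apply: eq_bigr => t _; rewrite big_cons.
Qed.

Lemma sum_tuple_prod_take (P : X -> R) (phi : seq X -> R) n N :
  \sum_x P x = 1 -> (n <= N)%N ->
  \sum_(t : N.-tuple X) (\prod_(y <- t) P y) * phi (take n t) =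
  \sum_(s : n.-tuple X) (\prod_(y <- s) P y) * phi s.
Proof.
move=> P1; elim: N n phi => [|N IHN] [|n] phi // le_nN.
- by apply: eq_bigr => t _; rewrite tuple0.
- under eq_bigr do rewrite take0.
  by rewrite -big_distrl sum_tuple_prod P1 expr1n sum_tuple0 big_nil /= !mul1r.
rewrite !sum_tuple_cons; apply: eq_bigr => x _ /=.
under eq_bigr do rewrite big_cons -mulrA.
under [RHS]eq_bigr do rewrite big_cons -mulrA.
by rewrite -big_distrr -[RHS]big_distrr /= (IHN n (fun s => phi (x :: s))).
Qed.

End TupleSums.

Section StoppingBelow.
Variables (R : realFieldType) (X : finType) (f : X -> R) (g0 g1 : R).

Definition prefix_sum (k : nat) (s : seq X) : R := \sum_(y <- take k s) f y.

Definition stops_below (n : nat) (s : seq X) : bool :=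
  [&& (0 < n)%N,
      [forall k : 'I_n, (0 < k)%N ==>
          (- g1 < prefix_sum k s) && (prefix_sum k s < g0)]
    & prefix_sum n s <= - g1].

Lemma prefix_sum_take k n s : (k <= n)%N -> prefix_sum k (take n s) = prefix_sum k s.
Proof. by move=> le_kn; rewrite /prefix_sum take_takel. Qed.

Lemma stops_below_take n s : stops_below n (take n s) = stops_below n s.
Proof.
rewrite /stops_below prefix_sum_take //; congr [&& _, _ & _].
by apply: eq_forallb => k; rewrite prefix_sum_take // ltnW.
Qed.

Lemma stops_below_inj n m s : stops_below n s -> stops_below m s -> n = m.
Proof.
move=> /and3P[n_gt0 /forallP before_n at_n] /and3P[m_gt0 /forallP before_m at_m].
case: (ltngtP n m) => // [lt_nm | lt_mn].
- have /implyP/(_ n_gt0)/andP[+ _] := before_m (Ordinal lt_nm).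
  by rewrite ltNge at_n.
- have /implyP/(_ m_gt0)/andP[+ _] := before_n (Ordinal lt_mn).
  by rewrite ltNge at_m.
Qed.

Lemma sum_stops_below_le1 K s : \sum_(n < K) (stops_below n s)%:R <= 1 :> R.
Proof.
case: (pickP (fun n : 'I_K => stops_below n s)) => [n stop_n | no_stop].
  rewrite (bigD1 n) //= stop_n big1 ?addr0 // => m ne_mn.
  case stop_m: (stops_below m s) => //.
  by case/eqP: ne_mn; apply/val_inj/(stops_below_inj stop_m stop_n).
by rewrite big1 // => n _; rewrite no_stop.
Qed.

Lemma stops_below_by N s :
  0 < g1 -> prefix_sum N s <= - g1 -> (forall k, (k <= N)%N -> prefix_sum k s < g0) ->
  exists2 n, (n <= N)%N & stops_below n s.
Proof.
move=> g1_gt0 below_N above_g0.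
have [n below_n min_n] := ex_minnP (ex_intro (fun n => prefix_sum n s <= - g1) N below_N).
have le_nN : (n <= N)%N by apply: min_n.
exists n => //; rewrite /stops_below below_n andbT.
have -> /= : (0 < n)%N.
  by rewrite lt0n; apply: contraTneq below_n => ->; rewrite /prefix_sum take0 big_nil -ltNge; lra.
apply/forallP => k; apply/implyP => _; apply/andP; split.
  by rewrite ltNge; apply/negP => /min_n; rewrite leqNgt ltn_ord.
by apply: above_g0; rewrite (leq_trans _ le_nN) // ltnW.
Qed.

(* Every run is still above -g1 at time N, or reaches g0 by time N, or stops
   below by time N. *)
Lemma sum_stops_below_ge N s : 0 < g1 ->
  1 - (- g1 <= prefix_sum N s)%R%:R - \sum_(k < N.+1) (g0 <= prefix_sum k s)%R%:R
  <= \sum_(n < N.+1) (stops_below n s)%:R :> R.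
Proof.
move=> g1_gt0.
have stops_ge0 : 0 <= \sum_(n < N.+1) (stops_below n s)%:R :> R by exact: sumr_ge0.
case: (leP (- g1) (prefix_sum N s)) => [_ | /ltW below_N]; rewrite ?mulr1n ?mulr0n ?subr0.
  have : 0 <= \sum_(k < N.+1) (g0 <= prefix_sum k s)%R%:R :> R by exact: sumr_ge0.
  by lra.
case: (pickP (fun k : 'I_N.+1 => g0 <= prefix_sum k s)) => [k above_k | below_g0].
  rewrite (bigD1 k) //= above_k.
  have : 0 <= \sum_(i < N.+1 | i != k) (g0 <= prefix_sum i s)%R%:R :> R by exact: sumr_ge0.
  rewrite mulr1n; lra.
have [n le_nN stop_n] : exists2 n, (n <= N)%N & stops_below n s.
  apply: stops_below_by => // k le_kN.
  by have /negbT := below_g0 (Ordinal (le_kN : (k < N.+1)%N)); rewrite -ltNge.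
rewrite big1 => [|k _]; last by rewrite below_g0.
rewrite (bigD1 (Ordinal (le_nN : (n < N.+1)%N))) //= stop_n mulr1n subr0 lerDl.
exact: sumr_ge0.
Qed.

End StoppingBelow.

Lemma sum_expr_le_inv (R : numFieldType) (r : R) n : 0 <= r -> r < 1 ->
  \sum_(k < n) r ^+ k <= (1 - r)^-1.
Proof.
move=> r_ge0 r_lt1.
have -> : \sum_(k < n) r ^+ k = series (geometric 1 r) n.
  by rewrite /series /= big_mkord; apply: eq_bigr => k _; rewrite mul1r.
rewrite geometric_seriesE ?lt_eqF //= mul1r -[X in _ <= X]mul1r.
by rewrite ler_pM2r ?invr_gt0 ?subr_gt0 // gerBl exprn_ge0.
Qed.

Section Chernoff.
Variables (R : realType) (X : finType) (P f : X -> R).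
Hypotheses (P_ge0 : forall x, 0 <= P x) (P_sum1 : \sum_x P x = 1).

Definition mgf (th : R) : R := \sum_x P x * expR (th * f x).

Lemma mgf_ge0 th : 0 <= mgf th.
Proof. by apply: sumr_ge0 => x _; rewrite mulr_ge0 ?expR_ge0. Qed.

Lemma sum_tuple_expR_prefix_sum th k :
  \sum_(s : k.-tuple X) (\prod_(y <- s) P y) * expR (th * prefix_sum f k s) = mgf th ^+ k.
Proof.
rewrite -sum_tuple_prod; apply: eq_bigr => s _.
by rewrite /prefix_sum take_oversize ?size_tuple // mulr_sumr expR_sum -big_split.
Qed.

Lemma indicator_le_expR th c x : 0 <= th -> (c <= x)%R%:R <= expR (th * (x - c)) :> R.
Proof.
move=> th_ge0; case: (boolP (c <= x)) => [le_cx | _]; last exact/ltW/expR_gt0.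
by rewrite -expR0 ler_expR mulr_ge0 // subr_ge0.
Qed.

Lemma chernoff_prefix_sum th c k N : 0 <= th -> (k <= N)%N ->
  \sum_(t : N.-tuple X) (\prod_(y <- t) P y) * (c <= prefix_sum f k t)%R%:R
  <= expR (- (th * c)) * mgf th ^+ k.
Proof.
move=> th_ge0 le_kN.
have -> : \sum_(t : N.-tuple X) (\prod_(y <- t) P y) * (c <= prefix_sum f k t)%R%:R =
          \sum_(s : k.-tuple X) (\prod_(y <- s) P y) * (c <= prefix_sum f k s)%R%:R.
  rewrite -(sum_tuple_prod_take (fun s => (c <= prefix_sum f k s)%R%:R) P_sum1 le_kN).
  by apply: eq_bigr => t _; rewrite prefix_sum_take.
rewrite -sum_tuple_expR_prefix_sum mulr_sumr; apply: ler_sum => s _.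
rewrite mulrCA; apply: ler_wpM2l; first exact: prodr_ge0.
by rewrite -expRD addrC -mulrN -mulrDr; exact: indicator_le_expR.
Qed.

Lemma expR_le_quadratic (y : R) : y <= 1 / 2 -> expR y <= 1 + y + 2 * y ^+ 2.
Proof.
move=> y_small; have y_lt1 : 0 < 1 - y by lra.
have exp_le : expR y <= (1 - y)^-1.
  by rewrite -[expR y]invrK -expRN lef_pV2 ?posrE ?expR_gt0 //; exact: expR_ge1Dx.
apply: (le_trans exp_le); rewrite -[(1 - y)^-1]mul1r ler_pdivrMr //.
have -> : (1 + y + 2 * y ^+ 2) * (1 - y) = 1 + y ^+ 2 * (1 - 2 * y) by ring.
by rewrite lerDl mulr_ge0 ?sqr_ge0 //; lra.
Qed.

Lemma mgf_le_quadratic th : (forall x, th * f x <= 1 / 2) ->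
  mgf th <= 1 + th * \sum_x P x * f x + 2 * th ^+ 2 * \sum_x P x * f x ^+ 2.
Proof.
move=> th_f_small.
have -> : 1 + th * \sum_x P x * f x + 2 * th ^+ 2 * \sum_x P x * f x ^+ 2 =
          \sum_x P x * (1 + th * f x + 2 * (th * f x) ^+ 2).
  rewrite -[X in X + _ + _ = _]P_sum1 !mulr_sumr -!big_split /=.
  by apply: eq_bigr => x _; ring.
by apply: ler_sum => x _; apply: ler_wpM2l => //; exact: expR_le_quadratic.
Qed.

Lemma mgf_lt1 : \sum_x P x * f x < 0 -> exists2 th, 0 < th & mgf th < 1.
Proof.
set mu := \sum_x P x * f x => mu_lt0.
set V := \sum_x P x * f x ^+ 2.
set B := \sum_x `|f x|.
have V_ge0 : 0 <= V by apply: sumr_ge0 => x _; rewrite mulr_ge0 ?sqr_ge0.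
have B_ge0 : 0 <= B by apply: sumr_ge0 => x _.
have f_le_B x : f x <= B.
  by rewrite (le_trans (ler_norm _)) // /B (bigD1 x) //= lerDl sumr_ge0.
have mu_B : 0 <= - mu * B by rewrite mulr_ge0 // oppr_ge0 ltW.
(* c is chosen so that th := - mu / c gives th * B <= 1/2 and 2 th^2 V <= - th mu / 2. *)
set c := 4 * V + 2 * (- mu * B) + 1.
have c_gt0 : 0 < c by rewrite /c; lra.
set th := - mu / c.
have th_gt0 : 0 < th by rewrite divr_gt0 ?oppr_gt0.
exists th => //.
have th_c : th * c = - mu by rewrite /th divfK ?gt_eqF.
have th_V : th * (4 * V) <= - mu.
  by rewrite -[X in _ <= X]th_c; apply: ler_wpM2l; [exact: ltW | rewrite /c; lra].
have th_mu_B : th * (2 * (- mu * B)) <= - mu.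
  by rewrite -[X in _ <= X]th_c; apply: ler_wpM2l; [exact: ltW | rewrite /c; lra].
have th_B : th * B <= 1 / 2 by nra.
have := mgf_le_quadratic (fun x => le_trans (ler_wpM2l (ltW th_gt0) (f_le_B x)) th_B).
rewrite -/mu -/V; nra.
Qed.

End Chernoff.

Section MismatchedTest.
Variables (R : realType) (X : finType) (Q0 Q1 : {ffun X -> R}).

Lemma Spart_prefix_sum n k (t : n.-tuple X) : (k <= n)%N ->
  Spart Q0 Q1 k t = prefix_sum (llr Q0 Q1) k t.
Proof.
case: n t => [|n] t le_kn.
  by move: le_kn; rewrite leqn0 => /eqP->; rewrite /Spart /prefix_sum big_ord0 take0 big_nil.
pose x0 := tnth t ord0.
rewrite /Spart /prefix_sum; under eq_bigr do rewrite (tnth_nth x0).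
rewrite -(big_ord_widen _ (fun i => llr Q0 Q1 (nth x0 t i)) le_kn).
rewrite (big_nth x0) size_takel ?size_tuple // big_mkord.
by apply: eq_bigr => i _; rewrite nth_take.
Qed.

Lemma stop_decide_trueE g0 g1 n (t : n.-tuple X) :
  stop_decide Q0 Q1 g0 g1 true t = stops_below (llr Q0 Q1) g0 g1 n t.
Proof.
rewrite /stop_decide /stops_below Spart_prefix_sum //; congr [&& _, _ & _].
by apply: eq_forallb => k; rewrite Spart_prefix_sum // ltnW.
Qed.

Lemma llr_swap x : (forall x, 0 < Q0 x) -> (forall x, 0 < Q1 x) ->
  llr Q1 Q0 x = - llr Q0 Q1 x.
Proof. by move=> Q0_gt0 Q1_gt0; rewrite /llr -invf_div lnV // posrE divr_gt0. Qed.

End MismatchedTest.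

Section MismatchedSPRT.
Variables (R : realType) (X : finType) (P Q0 Q1 : {ffun X -> R}) (g0 g1 : R).
Hypotheses (P_ge0 : forall x, 0 <= P x) (P_sum1 : \sum_x P x = 1).

Local Notation f := (llr Q0 Q1).
Local Notation decide1_before := (series (fun n : nat => prob_stop_decide P Q0 Q1 g0 g1 true n)).

Lemma prob_stop_decide_trueE n N : (n <= N)%N ->
  prob_stop_decide P Q0 Q1 g0 g1 true n =
  \sum_(t : N.-tuple X) (\prod_(y <- t) P y) * (stops_below f g0 g1 n t)%:R.
Proof.
move=> le_nN; rewrite /prob_stop_decide.
under eq_bigr do rewrite stop_decide_trueE -(big_tuple _ _ _ xpredT).
rewrite -(sum_tuple_prod_take (fun s => (stops_below f g0 g1 n s)%:R) P_sum1 le_nN).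
by apply: eq_bigr => t _; rewrite stops_below_take.
Qed.

Lemma decide1_beforeE N : decide1_before N =
  \sum_(t : N.-tuple X) (\prod_(y <- t) P y) * \sum_(n < N) (stops_below f g0 g1 n t)%:R.
Proof.
rewrite /series /= big_mkord.
under [LHS]eq_bigr => n _ do rewrite (prob_stop_decide_trueE (ltnW (ltn_ord n))).
by rewrite exchange_big /=; apply: eq_bigr => t _; rewrite mulr_sumr.
Qed.

Lemma sum_tuple_prod_pmf N : \sum_(t : N.-tuple X) \prod_(y <- t) P y = 1.
Proof. by rewrite sum_tuple_prod P_sum1 expr1n. Qed.

Lemma decide1_before_le1 N : decide1_before N <= 1.
Proof.
rewrite decide1_beforeE -[X in _ <= X](sum_tuple_prod_pmf N); apply: ler_sum => t _.
by rewrite -[X in _ <= X]mulr1 ler_wpM2l ?prodr_ge0 ?sum_stops_below_le1.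
Qed.

Lemma nondecreasing_decide1_before : nondecreasing_seq decide1_before.
Proof.
apply: (@nondecreasing_series _ _ xpredT 0) => n _ _.
by apply: sumr_ge0 => t _; rewrite mulr_ge0 ?prodr_ge0.
Qed.

Lemma is_cvgn_decide1_before : cvgn decide1_before.
Proof.
apply: nondecreasing_is_cvgn; first exact: nondecreasing_decide1_before.
by exists 1 => _ [n _ <-]; exact: decide1_before_le1.
Qed.

Lemma eps0_le1 : eps0 P Q0 Q1 g0 g1 <= 1.
Proof. by apply: limr_le; [exact: is_cvgn_decide1_before | apply: nearW; exact: decide1_before_le1]. Qed.

Lemma decide1_before_ge th N : 0 <= th -> mgf P f th < 1 -> 0 < g1 ->
  1 - expR (th * g1) * mgf P f th ^+ N - (1 - mgf P f th)^-1 * expR (- (th * g0))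
  <= decide1_before N.+1.
Proof.
set rho := mgf P f th => th_ge0 rho_lt1 g1_gt0.
have rho_ge0 : 0 <= rho by exact: mgf_ge0.
rewrite decide1_beforeE.
apply: (le_trans (y := \sum_(t : N.+1.-tuple X) (\prod_(y <- t) P y) *
    (1 - (- g1 <= prefix_sum f N t)%R%:R - \sum_(k < N.+1) (g0 <= prefix_sum f k t)%R%:R)));
  last by apply: ler_sum => t _; apply: ler_wpM2l; [exact: prodr_ge0 | exact: sum_stops_below_ge].
under eq_bigr do rewrite !mulrBr mulr1 mulr_sumr.
rewrite !sumrB exchange_big /= sum_tuple_prod_pmf.
have still_above : \sum_(t : N.+1.-tuple X) (\prod_(y <- t) P y) * (- g1 <= prefix_sum f N t)%R%:R
    <= expR (th * g1) * rho ^+ N.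
  by rewrite -[th * g1]opprK -mulrN; exact: chernoff_prefix_sum.
have crossed_g0 : \sum_(k < N.+1) \sum_(t : N.+1.-tuple X)
      (\prod_(y <- t) P y) * (g0 <= prefix_sum f k t)%R%:R
    <= (1 - rho)^-1 * expR (- (th * g0)).
  apply: (le_trans (y := \sum_(k < N.+1) expR (- (th * g0)) * rho ^+ k)).
    by apply: ler_sum => k _; apply: chernoff_prefix_sum; rewrite // ltnW.
  by rewrite -mulr_sumr mulrC ler_wpM2r ?expR_ge0 ?sum_expr_le_inv.
lra.
Qed.

Lemma eps0_ge th : 0 <= th -> mgf P f th < 1 -> 0 < g1 ->
  1 - (1 - mgf P f th)^-1 * expR (- (th * g0)) <= eps0 P Q0 Q1 g0 g1.
Proof.
set rho := mgf P f th => th_ge0 rho_lt1 g1_gt0.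
set c := 1 - _ * _.
have rho_ge0 : 0 <= rho by exact: mgf_ge0.
have lower_cvg : ((c - expR (th * g1) * rho ^+ N) @[N --> \oo] --> c)%classic.
  rewrite -[c in (_ --> c)%classic]subr0; apply: cvgB; first exact: cvg_cst.
  rewrite -(mulr0 (expR (th * g1))); apply: cvgM; first exact: cvg_cst.
  by apply: cvg_expr; rewrite ger0_norm.
rewrite -(cvg_lim _ lower_cvg) //; apply: limr_le; first by apply/cvg_ex; exists c.
apply: nearW => N; apply: (le_trans _ (nondecreasing_cvgn_le nondecreasing_decide1_before
  is_cvgn_decide1_before N.+1)).
by have := decide1_before_ge N th_ge0 rho_lt1 g1_gt0; rewrite /c; lra.
Qed.

End MismatchedSPRT.

Lemma mean_llr (R : realType) (X : finType) (P Q0 Q1 : {ffun X -> R}) :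
  (forall x, 0 < P x) -> (forall x, 0 < Q0 x) -> (forall x, 0 < Q1 x) ->
  \sum_x P x * llr Q0 Q1 x = KL P Q1 - KL P Q0.
Proof.
move=> P_gt0 Q0_gt0 Q1_gt0; rewrite /KL -sumrB; apply: eq_bigr => x _.
by rewrite /llr !ln_div ?posrE //; ring.
Qed.

Lemma eps1_eps0 (R : realType) (X : finType) (P Q0 Q1 : {ffun X -> R}) g0 g1 :
  (forall x, 0 < Q0 x) -> (forall x, 0 < Q1 x) ->
  eps1 P Q0 Q1 g0 g1 = eps0 P Q1 Q0 g1 g0.
Proof.
move=> Q0_gt0 Q1_gt0.
have Spart_swap n k (t : n.-tuple X) : Spart Q1 Q0 k t = - Spart Q0 Q1 k t.
  by rewrite /Spart -sumrN; apply: eq_bigr => i _; rewrite llr_swap.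
rewrite /eps1 /eps0 /prob_decide; congr (limn (series _)); apply/funext => n.
apply: eq_bigr => t _; congr (_ * _%:R).
rewrite /stop_decide !Spart_swap lerN2; congr [&& _, _ & _].
by apply: eq_forallb => k; rewrite !Spart_swap ltrN2 ltrNl andbC.
Qed.

Lemma tends_to_one_of_expR_bound (R : realType) (F : R -> R -> R) (c th : R) :
  0 < c -> 0 < th ->
  (forall g0 g1, 0 < g0 -> 0 < g1 -> 1 - c * expR (- (th * g0)) <= F g0 g1 <= 1) ->
  tends_to_as_thresholds_grow F 1.
Proof.
move=> c_gt0 th_gt0 F_bounds e e_gt0.
exists (ln (c / e) / th) => g0 g1 g0_gt0 g1_gt0 g0_large _.
have /andP[F_ge F_le1] := F_bounds g0 g1 g0_gt0 g1_gt0.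
have tail_small : c * expR (- (th * g0)) < e.
  rewrite mulrC -ltr_pdivlMr // -[e / c]lnK ?posrE ?divr_gt0 // ltr_expR.
  rewrite -invf_div lnV ?posrE ?divr_gt0 // ltrN2.
  by move: g0_large; rewrite ltr_pdivrMr // [g0 * _]mulrC.
by rewrite ler0_norm ?subr_le0 // opprB; lra.
Qed.

Lemma eps0_tends_to_one (R : realType) (X : finType) (P Q0 Q1 : {ffun X -> R}) :
  full_pmf P -> (forall x, 0 < Q0 x) -> (forall x, 0 < Q1 x) ->
  KL P Q1 - KL P Q0 < 0 -> tends_to_as_thresholds_grow (eps0 P Q0 Q1) 1.
Proof.
move=> [P_gt0 P_sum1] Q0_gt0 Q1_gt0; rewrite -mean_llr // => mean_lt0.
have P_ge0 x : 0 <= P x by exact: ltW.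
have [th th_gt0 mgf_lt1] := mgf_lt1 P_ge0 P_sum1 mean_lt0.
apply: (tends_to_one_of_expR_bound (c := (1 - mgf P (llr Q0 Q1) th)^-1) _ th_gt0).
  by rewrite invr_gt0 subr_gt0.
move=> g0 g1 _ g1_gt0; apply/andP; split; first exact: eps0_ge (ltW th_gt0) mgf_lt1 g1_gt0.
exact: eps0_le1.
Qed.

Unset Implicit Arguments.

(* Q0, Q1 are the mismatched distributions hat P_0, hat P_1 used by the test. *)
Theorem theorem7 (R : realType) (X : finType) (P0 P1 Q0 Q1 : {ffun X -> R}) :
  full_pmf P0 -> full_pmf P1 -> full_pmf Q0 -> full_pmf Q1 ->
  (KL P0 Q1 - KL P0 Q0 < 0 ->
     tends_to_as_thresholds_grow (eps0 P0 Q0 Q1) 1) /\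
  (KL P1 Q0 - KL P1 Q1 < 0 ->
     tends_to_as_thresholds_grow (eps1 P1 Q0 Q1) 1).
Proof.
move=> pmf_P0 pmf_P1 [Q0_gt0 _] [Q1_gt0 _]; split; first exact: eps0_tends_to_one.
move=> KL_lt0 e e_gt0; have [M eps0_close] := eps0_tends_to_one pmf_P1 Q1_gt0 Q0_gt0 KL_lt0 e_gt0.
exists M => g0 g1 g0_gt0 g1_gt0 g0_large g1_large.
by rewrite eps1_eps0 //; exact: eps0_close.
Qed.
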